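(* Let $\sigma$ be a signature and $\mathcal F\in\mathbb F_\sigma$. (i) If $S,T$ are generalized causal teams over $\sigma$ with $T$ uniform and $T=T^{\mathcal F}$, then $S\models^g\Theta^{T^-}\wedge\Phi^{\mathcal F}$ iff $S\preccurlyeq T$. (ii) For any causal teams $S=(S^-,\mathcal G)$ and $T=(T^-,\mathcal F)$ over $\sigma$: $S\models^c\Theta^{T^-}\wedge\Phi^{\mathcal F}$ iff $S\preccurlyeq T$.
   Context: A signature $\sigma=(\mathrm{Dom},\mathrm{Ran})$: $\mathrm{Dom}$ nonempty finite set of variables, each with nonempty finite range $\mathrm{Ran}(X)$; $\mathbf X=\mathbf x$ abbreviates $X_1=x_1\wedge\dots\wedge X_n=x_n$ ($\mathbf x\in\prod\mathrm{Ran}(X_i)$), inconsistent if it contains $X=x,X=x'$ with $x\ne x'$. $\mathcal{CO}[\sigma]$: $\alpha::=X=x\mid\neg\alpha\mid\alpha\wedge\alpha\mid\alpha\vee\alpha\mid\mathbf X=\mathbf x\;\Box\!\!\rightarrow\alpha$; $\alpha\supset\beta$ abbreviates $\neg\alpha\vee\beta$; $\bot$ abbreviates $X=x\wedge\neg(X=x)$. Systems of functions $\mathcal F$: for each $V\in\mathrm{En}(\mathcal F)\subseteq\mathrm{Dom}$ parents $PA^{\mathcal F}_V\subseteq\mathrm{Dom}\setminus\{V\}$ and $\mathcal F_V:\mathrm{Ran}(PA^{\mathcal F}_V)\to\mathrm{Ran}(V)$; $\mathrm{Ex}(\mathcal F)=\mathrm{Dom}\setminus\mathrm{En}(\mathcal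 F)$; only recursive (acyclic parent graph), forming $\mathbb F_\sigma$. Assignments $s$ ($s(X)\in\mathrm{Ran}(X)$) form $\mathbb A_\sigma$; $s$ is compatible with $\mathcal F$ if $s(V)=\mathcal F_V(s(PA^{\mathcal F}_V))$ for $V\in\mathrm{En}(\mathcal F)$. For consistent $\mathbf X=\mathbf x$: $\mathcal F_{\mathbf X=\mathbf x}$ restricts $\mathcal F$ to $\mathrm{En}(\mathcal F)\setminus\mathbf X$; $s^{\mathcal F}_{\mathbf X=\mathbf x}$: $X_i\mapsto x_i$, $V\mapsto s(V)$ on $\mathrm{Ex}(\mathcal F)\setminus\mathbf X$, $V\mapsto\mathcal F_V(s^{\mathcal F}_{\mathbf X=\mathbf x}(PA^{\mathcal F}_V))$ on $\mathrm{En}(\mathcal F)\setminus\mathbf X$. Causal team $T=(T^-,\mathcal F)$ ($T^-$ a set of compatible assignments; all teams with empty team component identified as $\emptyset$); causal subteams $(S^-,\mathcal F)$, $S^-\subseteq T^-$ (and $\emptyset$); $T_{\mathbf X=\mathbf x}=(\{s^{\mathcal F}_{\mathbf X=\mathbf x}:s\in T^-\},\mathcal F_{\mathbf X=\mathbf x})$. $\models^c$: $T\models X=x$ iff $s(X)=x$ for all $s\in T^-$; $T\models\neg\alpha$ iff $(\{s\},\mathcal F)\not\models\alpha$ for all $s\in T^-$; $\wedge$ classical; $T\models\alpha\vee\beta$ iff causal subteams $T_1,T_2$ exist with $T_1^-\cup T_2^-=T^-$, $T_1\models\alpha$, $T_2\models\beta$; $T\models\mathbf X=\mathbf x\;\Box\!\!\rightarrow\alpha$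 iff $\mathbf X=\mathbf x$ inconsistent or $T_{\mathbf X=\mathbf x}\models\alpha$. Generalized causal team: a set $T$ of compatible pairs $(s,\mathcal F)$, $\mathcal F\in\mathbb F_\sigma$; subteams are subsets; $T^-=\{s:(s,\mathcal F)\in T\}$; $T_{\mathbf X=\mathbf x}=\{(s^{\mathcal F}_{\mathbf X=\mathbf x},\mathcal F_{\mathbf X=\mathbf x}):(s,\mathcal F)\in T\}$; $\models^g$: same clauses except $T\models\neg\alpha$ iff $\{(s,\mathcal F)\}\not\models\alpha$ for all $(s,\mathcal F)\in T$, and $T\models\alpha\vee\beta$ iff $T=T_1\cup T_2$ with $T_1\models\alpha$, $T_2\models\beta$. $\mathrm{Cn}(\mathcal F)=\{V\in\mathrm{En}(\mathcal F):\mathcal F_V\text{ constant}\}$; $\mathcal F_V\sim\mathcal G_V$ iff $\mathcal F_V(\mathbf x\mathbf y)=\mathcal G_V(\mathbf x\mathbf z)$ for all $\mathbf x\in\mathrm{Ran}(PA^{\mathcal F}_V\cap PA^{\mathcal G}_V)$, $\mathbf y\in\mathrm{Ran}(PA^{\mathcal F}_V\setminus PA^{\mathcal G}_V)$, $\mathbf z\in\mathrm{Ran}(PA^{\mathcal G}_V\setminus PA^{\mathcal F}_V)$; $\mathcal F\sim\mathcal G$ iff $\mathrm{En}(\mathcal F)\setminus\mathrm{Cn}(\mathcal F)=\mathrm{En}(\mathcal G)\setminus\mathrm{Cn}(\mathcal G)$ and $\mathcal F_V\sim\mathcal G_V$ for each such $V$. Nonempty causal teams: $(T^-,\mathcal F)\approx(S^-,\mathcal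 G)$ iff $T^-=S^-$ and $\mathcal F\sim\mathcal G$. Generalized: $T^{\mathcal F}=\{(s,\mathcal G)\in T:\mathcal G\sim\mathcal F\}$; $S\approx T$ iff $(S^{\mathcal F})^-=(T^{\mathcal F})^-$ for all $\mathcal F$; $T$ uniform iff $\mathcal F\sim\mathcal G$ for all $(s,\mathcal F),(t,\mathcal G)\in T$. $S\preccurlyeq T$ iff $S\approx R$ for some causal subteam $R$ of $T$; also $\emptyset\preccurlyeq T$ for every $T$. $\Theta^{T^-}:=\bigvee_{s\in T^-}\bigwedge_{V\in\mathrm{Dom}}V=s(V)$ (equal to $\bot$ if $T^-=\emptyset$). With $\mathbf W_V$ listing $\mathrm{Dom}\setminus\{V\}$: $\Phi^{\mathcal F}:=\bigwedge_{V\in\mathrm{En}(\mathcal F)\setminus\mathrm{Cn}(\mathcal F)}\eta(V)\wedge\bigwedge_{V\notin\mathrm{En}(\mathcal F)\setminus\mathrm{Cn}(\mathcal F)}\xi(V)$, where $\eta(V)$ is the conjunction of all $(\mathbf W=\mathbf w\wedge PA^{\mathcal F}_V=\mathbf p)\;\Box\!\!\rightarrow V=\mathcal F_V(\mathbf p)$ ($\mathbf W$ listing $\mathrm{Dom}\setminus(PA^{\mathcal F}_V\cup\{V\})$, $\mathbf w\in\mathrm{Ran}(\mathbf W)$, $\mathbf p\in\mathrm{Ran}(PA^{\mathcal F}_V)$) and $\xi(V)$ is the conjunction of all $V=v\supset(\mathbf W_V=\mathbf w\;\Box\!\!\rightarrow V=v)$ ($v\in\mathrm{Ran}(V)$, $\mathbf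 w\in\mathrm{Ran}(\mathbf W_V)$). *)

From HB Require Import structures.
From mathcomp Require Import all_boot.
From mathcomp Require Import boolp.
Record signature := Signature {
  var : finType;
  ran : var -> finType;
  var0 : var;
  ran0 : forall X : var, ran X }.

Set Implicit Arguments. Unset Strict Implicit. Unset Printing Implicit Defensive.

Section CO.
Variable sg : signature.
Local Notation V := (var sg).
Local Notation Ran := (ran sg).

Definition assign := {dffun forall X : V, Ran X}.
(* elements of Ran(A) for a set of variables A *)
Definition passign (A : {set V}) := {dffun forall X : {X : V | X \in A}, Ran (val X)}.
Definition restrict (s : assign) (A : {set V}) : passign A :=
  @finfun _ (fun X : {X : V | X \in A} => Ran (val X)) (fun X => s (val X)).

(* systems of functions: endogenous set, parents, functions F_V : Ran(PA_V) -> Ran(V)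
   (pa and fn are irrelevant outside en) *)
Record system := System {
  en : {set V};
  pa : V -> {set V};
  fn : forall X : V, passign (pa X) -> Ran X }.

Definition edge (F : system) : rel V := fun u w => (w \in en F) && (u \in pa F w).
(* F in F_sigma : PA_V subset of Dom \ {V}, and the parent graph is acyclic *)
Definition wf (F : system) : Prop :=
  (forall X, X \in en F -> X \notin pa F X) /\
  (forall u w, edge F u w -> ~~ connect (edge F) w u).

Definition compatible (s : assign) (F : system) : Prop :=
  forall X, X \in en F -> s X = @fn F _ (restrict s (pa F X)).

(* syntax of CO[sigma]; an intervention X = x is a list of (variable, value) pairs *)
Inductive form : Type :=
| FEq (X : V) (x : Ran X)
| FNeg (a : form)
| FAnd (a b : form)
| FOr (a b : form)
| FCf (l : seq {X : V & Ran X}) (a : form).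

Definition consistent (l : seq {X : V & Ran X}) : bool :=
  all (fun p => all (fun q => (tag p == tag q) ==> (p == q)) l) l.

Definition ival (l : seq {X : V & Ran X}) (X : V) : option (Ran X) :=
  foldr (fun u acc => @untag _ Ran _ acc X (fun x => Some x) u) None l.

Definition int_sys (F : system) (l : seq {X : V & Ran X}) : system :=
  System (en F :\: [set X | isSome (ival l X)]) (@fn F).

Definition int_step (F : system) (l : seq {X : V & Ran X}) (s t : assign) : assign :=
  @finfun _ Ran (fun X => match ival l X with
                          | Some x => x
                          | None => if X \in en F then @fn F _ (restrict t (pa F X)) else s X
                          end).

(* s^F_{X=x}: the recursive definition is computed by iterating the defining
   equations #|Dom| times (this reaches the unique solution since F is acyclic). *)
Definition int_assign (s : assign) (F : system) (l : seq {X : V & Ran X}) : assign :=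
  iter #|V| (int_step F l s) s.

(* causal-team semantics |=^c ; a causal team is (T^-, F) *)
Fixpoint csat (T : {set assign}) (F : system) (a : form) {struct a} : Prop :=
  match a with
  | FEq X x => forall s, s \in T -> s X = x
  | FNeg b => forall s, s \in T -> ~ csat [set s] F b
  | FAnd b c => csat T F b /\ csat T F c
  | FOr b c => exists T1 T2 : {set assign},
      T1 :|: T2 = T /\ csat T1 F b /\ csat T2 F c
  | FCf l b => ~~ consistent l \/
      csat [set int_assign s F l | s in T] (int_sys F l) b
  end.

Definition gteam := assign * system -> Prop.

Fixpoint gsat (T : gteam) (a : form) {struct a} : Prop :=
  match a with
  | FEq X x => forall p, T p -> p.1 X = x
  | FNeg b => forall p, T p -> ~ gsat (fun q => q = p) b
  | FAnd b c => gsat T b /\ gsat T c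
  | FOr b c => exists T1 T2 : gteam,
      (forall p, T p <-> T1 p \/ T2 p) /\ gsat T1 b /\ gsat T2 c
  | FCf l b => ~~ consistent l \/
      gsat (fun p => exists s F, T (s, F) /\ p = (int_assign s F l, int_sys F l)) b
  end.

Definition is_cteam (T : {set assign}) (F : system) : Prop :=
  wf F /\ forall s, s \in T -> compatible s F.
Definition is_gteam (T : gteam) : Prop :=
  forall s F, T (s, F) -> wf F /\ compatible s F.

Definition constantb (F : system) (X : V) : bool :=
  [forall p : passign (pa F X), [forall q : passign (pa F X), @fn F _ p == @fn F _ q]].
Definition Cn (F : system) : {set V} := [set X in en F | constantb F X].
Definition NC (F : system) : {set V} := en F :\: Cn F.

Definition simfn (F G : system) (X : V) : Prop :=
  forall (p : passign (pa F X)) (q : passign (pa G X)),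
    (forall Y (h1 : Y \in pa F X) (h2 : Y \in pa G X),
        p (exist _ Y h1) = q (exist _ Y h2)) ->
    @fn F _ p = @fn G _ q.
Definition sim (F G : system) : Prop :=
  NC F = NC G /\ forall X, X \in NC F -> simfn F G X.

Definition capprox (S : {set assign}) (G : system) (T : {set assign}) (F : system) : Prop :=
  S != set0 /\ T != set0 /\ S = T /\ sim G F.
Definition cprec (S : {set assign}) (G : system) (T : {set assign}) (F : system) : Prop :=
  S = set0 \/ exists R : {set assign}, R \subset T /\ capprox S G R F.

Definition gproj (T : gteam) : {set assign} := [set s | `[< exists F, T (s, F) >]].
Definition grestr (T : gteam) (F : system) : gteam := fun p => T p /\ sim p.2 F.
Definition gapprox (S T : gteam) : Prop :=
  forall F, wf F -> gproj (grestr S F) = gproj (grestr T F).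
Definition uniform (T : gteam) : Prop :=
  forall s F t G, T (s, F) -> T (t, G) -> sim F G.
Definition gprec (S T : gteam) : Prop :=
  (forall p, ~ S p) \/ exists R : gteam, (forall p, R p -> T p) /\ gapprox S R.

Definition fbot : form := FAnd (FEq (ran0 sg (var0 sg))) (FNeg (FEq (ran0 sg (var0 sg)))).
Definition ftop : form := FNeg fbot.
Fixpoint bigor (l : seq form) : form :=
  match l with
  | [::] => fbot
  | a :: l' => match l' with [::] => a | _ => FOr a (bigor l') end
  end.
Fixpoint bigand (l : seq form) : form :=
  match l with
  | [::] => ftop
  | a :: l' => match l' with [::] => a | _ => FAnd a (bigand l') end
  end.

Definition ilist (A : {set V}) (p : passign A) : seq {X : V & Ran X} :=
  [seq Tagged Ran (p X) | X <- enum {: {X : V | X \in A}}].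

Definition Theta (T : {set assign}) : form :=
  bigor [seq bigand [seq FEq (s X) | X <- enum V] | s : assign <- enum T].

Definition eta (F : system) (X : V) : form :=
  bigand [seq FCf (ilist w ++ ilist p) (FEq (@fn F _ p))
         | w <- enum (passign (~: (pa F X :|: [set X]))),
           p <- enum (passign (pa F X))].

Definition xi (X : V) : form :=
  bigand [seq FOr (FNeg (FEq v)) (FCf (ilist w) (FEq v))
         | v <- enum (Ran X), w <- enum (passign (~: [set X]))].

Definition Phi (F : system) : form :=
  FAnd (bigand [seq eta F X | X <- enum (NC F)])
       (bigand [seq xi X | X <- enum (~: NC F)]).

End CO.

From Pilot Require Import Defs.
From HB Require Import structures.
From mathcomp Require Import all_boot.
From mathcomp Require Import boolp.

(* The logic is flat: a team satisfies a formula iff each of its pairs (s, G) does, so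
   everything reduces to a single pair with s compatible with G.  Such a pair satisfies
   Theta^A iff s is in A.  Intervening on every variable except X leaves X at its
   response: F_X of the intervened parents if X is endogenous, its old value otherwise.
   Hence eta(X) says that X responds in G as it does in F, and xi(X) that it does not
   respond at all, i.e. that X is not in NC(G); together Phi^F holds at (s, G) iff
   G ~ F.  Since every member of T is ~ F, the preorder S <= T unfolds to the same
   pointwise condition. *)

Set Implicit Arguments. Unset Strict Implicit. Unset Printing Implicit Defensive.

Section Semantics.
Variable sg : signature.
Local Notation V := (var sg).
Local Notation Ran := (ran sg).
Local Notation form := (form sg).
Local Notation assign := (assign sg).
Local Notation system := (system sg).
Local Notation gteam := (gteam sg).

Definition sat1 (p : assign * system) (a : form) : Prop := gsat (fun q => q = p) a.

Definition flat (a : form) : Prop :=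
  forall T : gteam, gsat T a <-> forall p, T p -> sat1 p a.

Lemma gsat_empty (a : form) (T : gteam) : (forall p, ~ T p) -> gsat T a.
Proof.
elim: a T => [X x|b IH|b IHb c IHc|b IHb c IHc|l b IH] T T0 /=.
- by move=> p Tp; case: (T0 p Tp).
- by move=> p Tp; case: (T0 p Tp).
- by split; [apply: IHb|apply: IHc].
- by exists T, T; split=> [p|]; [tauto|split; [apply: IHb|apply: IHc]].
- by right; apply: IH => p [s [G [/T0]]].
Qed.

Lemma sat1_eq p X (x : Ran X) : sat1 p (FEq x) <-> p.1 X = x.
Proof. by split=> [|Hx q ->]; [apply|]. Qed.

Lemma sat1_neg p (b : form) : sat1 p (FNeg b) <-> ~ sat1 p b.
Proof. by split=> [|Hb q ->]; [apply|]. Qed.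

Lemma sat1_and p (b c : form) : sat1 p (FAnd b c) <-> sat1 p b /\ sat1 p c.
Proof. by []. Qed.

Lemma sat1_or_flat p (b c : form) :
  flat b -> flat c -> sat1 p (FOr b c) <-> sat1 p b \/ sat1 p c.
Proof.
move=> flat_b flat_c; split.
- move=> [T1 [T2 [cover [/flat_b H1 /flat_c H2]]]].
  by case: ((cover p).1 erefl) => [/H1|/H2]; auto.
- case=> [Hb|Hc].
  + exists (fun q => q = p), (fun _ => False); split; first by move=> q; tauto.
    by split; [exact: Hb|apply: gsat_empty => ? []].
  + exists (fun _ => False), (fun q => q = p); split; first by move=> q; tauto.
    by split; [apply: gsat_empty => ? []|exact: Hc].
Qed.

Lemma gsat_flat (a : form) : flat a.
Proof.
elim: a => [X x|b IH|b IHb c IHc|b IHb c IHc|l b IH] T /=.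
- by split=> H p /H; rewrite sat1_eq.
- by split=> H p /H; rewrite sat1_neg.
- rewrite IHb IHc; split=> [[Hb Hc] p Tp|H]; first by rewrite sat1_and; auto.
  by split=> p /H [].
- have sat1_or p := sat1_or_flat p IHb IHc.
  split.
  + move=> [T1 [T2 [cover [/IHb H1 /IHc H2]]]] p /cover [/H1|/H2];
      by rewrite sat1_or; auto.
  + move=> H; exists (fun p => T p /\ sat1 p b), (fun p => T p /\ sat1 p c).
    rewrite IHb IHc; split=> [p|]; last by split=> p [].
    by split=> [Tp|[] []//]; have /sat1_or [] := H p Tp; auto.
- case E: (consistent l) => /=; last by split=> [_ p _|_]; [rewrite /sat1 /= E|]; left.
  rewrite IH; split.
  + case=> // H p Tp; right; rewrite IH => q [s [G [Ep ->]]].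
    by apply: H; exists s, G; rewrite Ep.
  + move=> H; right => q [s [G [Tp ->]]].
    have := H _ Tp; rewrite /sat1 /= E => -[//|/IH]; apply.
    by exists s, G.
Qed.

Lemma sat1_or p (b c : form) : sat1 p (FOr b c) <-> sat1 p b \/ sat1 p c.
Proof. exact: sat1_or_flat (gsat_flat b) (gsat_flat c). Qed.

Lemma sat1_cf p l (b : form) :
  sat1 p (FCf l b) <-> ~~ consistent l \/ sat1 (int_assign p.1 p.2 l, int_sys p.2 l) b.
Proof.
case: p => s G; rewrite {1}/sat1 /= gsat_flat.
split=> -[|H]; [by left|right|by left|right].
- by apply: H; exists s, G.
- by move=> q [_ [_ [[-> ->] ->]]].
Qed.

Lemma sat1_fbot p : ~ sat1 p (fbot sg).
Proof. by move=> [Hx /(_ p erefl)]. Qed.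

Lemma sat1_ftop p : sat1 p (ftop sg).
Proof. exact/sat1_neg/sat1_fbot. Qed.

Lemma sat1_bigand_cons p (a : form) l :
  sat1 p (bigand (a :: l)) <-> sat1 p a /\ sat1 p (bigand l).
Proof.
by case: l => [|b l] //=; split=> [Ha|[]//]; split=> //; apply: sat1_ftop.
Qed.

Lemma sat1_bigor_cons p (a : form) l :
  sat1 p (bigor (a :: l)) <-> sat1 p a \/ sat1 p (bigor l).
Proof. by case: l => [|b l] /=; [split=> [|[|/sat1_fbot]]; auto|apply: sat1_or]. Qed.

Lemma sat1_bigand_cat p (l1 l2 : seq form) :
  sat1 p (bigand (l1 ++ l2)) <-> sat1 p (bigand l1) /\ sat1 p (bigand l2).
Proof.
elim: l1 => [|a l1 IH] /=.
  by split=> [|[]//]; split=> //; apply: sat1_ftop.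
by rewrite !sat1_bigand_cons IH; tauto.
Qed.

Lemma sat1_bigand_map p (T : eqType) (f : T -> form) (s : seq T) :
  sat1 p (bigand [seq f x | x <- s]) <-> forall x, x \in s -> sat1 p (f x).
Proof.
elim: s => [|x s IH] /=; first by split=> // _; apply: sat1_ftop.
rewrite sat1_bigand_cons IH; split=> [[Hx Hs] y|H].
  by rewrite inE => /predU1P [->|/Hs].
by split=> [|y ys]; apply: H; rewrite inE ?eqxx ?ys ?orbT.
Qed.

Lemma sat1_bigand_allpairs p (S T : eqType) (f : S -> T -> form) s t :
  sat1 p (bigand [seq f x y | x <- s, y <- t])
  <-> forall x y, x \in s -> y \in t -> sat1 p (f x y).
Proof.
elim: s => [|x s IH] /=; first by split=> // _; apply: sat1_ftop.
rewrite sat1_bigand_cat sat1_bigand_map IH; split=> [[Hx Hs] x' y|H].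
  by rewrite inE => /predU1P [->|xs]; [exact: Hx|exact: Hs].
by split=> [y|x' y xs]; apply: H; rewrite inE ?eqxx ?xs ?orbT.
Qed.

Lemma sat1_bigor_map p (T : eqType) (f : T -> form) (s : seq T) :
  sat1 p (bigor [seq f x | x <- s]) <-> exists2 x, x \in s & sat1 p (f x).
Proof.
elim: s => [|x s IH] /=; first by split=> [/sat1_fbot|[]].
rewrite sat1_bigor_cons IH; split=> [[Hx|[y ys Hy]]|[y]]; last first.
- by rewrite inE => /predU1P [->|ys Hy]; [left|right; exists y].
- by exists y; rewrite // inE ys orbT.
- by exists x; rewrite ?inE ?eqxx.
Qed.

Lemma sat1_Theta p (A : {set assign}) : sat1 p (Theta A) <-> p.1 \in A.
Proof.
rewrite /Theta sat1_bigor_map; split=> [[s]|pA].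
  rewrite mem_enum => sA /sat1_bigand_map Hs; suff -> : p.1 = s by [].
  by apply/ffunP => X; apply/sat1_eq/Hs; rewrite mem_enum.
exists p.1; first by rewrite mem_enum.
by apply/sat1_bigand_map => X _; apply/sat1_eq.
Qed.

Lemma csat_sat1 (a : form) (S : {set assign}) (G : system) :
  csat S G a <-> forall s, s \in S -> sat1 (s, G) a.
Proof.
elim: a S G => [X x|b IH|b IHb c IHc|b IHb c IHc|l b IH] S G /=.
- by split=> H s /H; rewrite sat1_eq.
- have sat1_set1 s : csat [set s] G b <-> sat1 (s, G) b.
    by rewrite IH; split=> [|Hs t /set1P ->]; [apply; rewrite inE|].
  by split=> H s /H; rewrite sat1_neg sat1_set1.
- rewrite IHb IHc; split=> [[Hb Hc] s sS|H]; first by rewrite sat1_and; auto.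
  by split=> s /H [].
- split=> [[T1 [T2 [<- [/IHb H1 /IHc H2]]]] s|H].
    by rewrite inE sat1_or => /orP [/H1|/H2]; auto.
  exists [set s in S | `[< sat1 (s, G) b >]], [set s in S | `[< sat1 (s, G) c >]].
  rewrite IHb IHc; split; last by split=> s; rewrite inE => /andP [_ /asboolP].
  apply/setP => s; rewrite !inE -andb_orr.
  case sS: (s \in S) => //=; have /sat1_or [] := H s sS => Hs.
  + by apply/orP; left; apply/asboolP.
  + by apply/orP; right; apply/asboolP.
- rewrite IH; have sat1_cfE s := sat1_cf (s, G) l b.
  case: (consistent l) sat1_cfE => /= sat1_cfE.
  + split=> [[//|H] s sS|H]; first by apply/sat1_cfE; right; apply/H/imset_f.
    by right=> t /imsetP [s sS ->]; have [] := (sat1_cfE s).1 (H s sS).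
  + by split=> [_ s _|_]; [apply/sat1_cfE|]; left.
Qed.

Definition intervention (u : assign) (L : seq V) : seq {X : V & Ran X} :=
  [seq Tagged Ran (u Y) | Y <- L].

Lemma ival_intervention u L Y :
  ival (intervention u L) Y = if Y \in L then Some (u Y) else None.
Proof.
elim: L => [|Z L IH] //; rewrite /ival /= -/(ival _ _) IH inE.
case: (eqVneq Y Z) => [->|YZ] /=.
  by rewrite /untag; case: eqP => // e; rewrite eq_axiomK.
by rewrite untag_dflt // eq_sym.
Qed.

Lemma consistent_intervention u L : consistent (intervention u L).
Proof.
apply/allP => _ /mapP [Y _ ->]; apply/allP => _ /mapP [Z _ ->] /=.
by apply/implyP => /eqP ->.
Qed.

Lemma ilist_restrict u (A : {set V}) :
  exists2 L, ilist (restrict u A) = intervention u L & L =i A.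
Proof.
exists [seq val Z | Z <- enum {: {X : V | X \in A}}].
  by rewrite /ilist /intervention -[RHS]map_comp; apply: eq_map => Z /=; rewrite ffunE.
move=> Y; apply/mapP/idP => [[Z _ ->]|YA]; first exact: valP.
by exists (exist _ Y YA); rewrite ?mem_enum.
Qed.

Lemma restrictE u (A : {set V}) Y (h : Y \in A) : restrict u A (exist _ Y h) = u Y.
Proof. by rewrite ffunE. Qed.

Lemma restrict_glue (A B : {set V}) (p : passign A) (q : passign B) :
  (forall Y (hA : Y \in A) (hB : Y \in B), p (exist _ Y hA) = q (exist _ Y hB)) ->
  exists u : assign, restrict u A = p /\ restrict u B = q.
Proof.
move=> pq; have /fin_all_exists [u Hu] : forall Y, exists y : Ran Y,
    (forall hA : Y \in A, y = p (exist _ Y hA)) /\ (forall hB : Y \in B, y = q (exist _ Y hB)).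
  move=> Y; have [hA|nA] : Y \in A \/ Y \notin A by case: (Y \in A); auto.
    exists (p (exist _ Y hA)); split=> [hA'|hB]; last exact: pq.
    by rewrite (bool_irrelevance hA' hA).
  have [hB|nB] : Y \in B \/ Y \notin B by case: (Y \in B); auto.
    exists (q (exist _ Y hB)); split=> [hA|hB']; first by rewrite hA in nA.
    by rewrite (bool_irrelevance hB' hB).
  by exists (ran0 sg Y); split=> h; [rewrite h in nA|rewrite h in nB].
by exists (finfun u); split; apply/ffunP => -[Y h]; rewrite restrictE ffunE; apply Hu.
Qed.

Lemma restrict_surj (A : {set V}) (p : passign A) : exists u : assign, restrict u A = p.
Proof.
have [|u [Hu _]] := @restrict_glue A A p p; last by exists u.
by move=> Y hA hA'; rewrite (bool_irrelevance hA hA').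
Qed.

Definition response (G : system) (s u : assign) (X : V) : Ran X :=
  if X \in en G then fn (restrict u (pa G X)) else s X.

Lemma int_assign_others (G : system) l (s u : assign) X :
  wf G -> ival l X = None -> (forall Y, Y != X -> ival l Y = Some (u Y)) ->
  int_assign s G l X = response G s u X.
Proof.
move=> [noself _] lX lY; rewrite /int_assign /response.
have : 0 < #|V| by apply/card_gt0P; exists (var0 sg).
case cardV: #|V| => [//|n] _; rewrite iterS ffunE lX.
case XG: (X \in en G) => //; congr fn; apply/ffunP => -[Y YX]; rewrite !ffunE /=.
have neqYX : Y != X by apply: contraTneq YX => ->; exact: noself.
case: n cardV => [cardV|n _]; last by rewrite iterS ffunE lY.
(* A single iteration suffices: with only one variable, X has no parent at all. *)
by have := max_card (mem [set X; Y]); rewrite cards2 cardV eq_sym neqYX.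
Qed.

Lemma sat1_cf_others (G : system) (s u : assign) X (L : seq V) (v : Ran X) :
  wf G -> (forall Y, (Y \in L) = (Y != X)) ->
  sat1 (s, G) (FCf (intervention u L) (FEq v)) <-> response G s u X = v.
Proof.
move=> wG HL; rewrite sat1_cf consistent_intervention sat1_eq /=.
rewrite (@int_assign_others G (intervention u L) s u X wG); first by split=> [[]|]; auto.
  by rewrite ival_intervention HL eqxx.
by move=> Y YX; rewrite ival_intervention HL YX.
Qed.

Lemma sat1_eta (F G : system) (s : assign) X :
  wf F -> wf G -> X \in en F ->
  sat1 (s, G) (Defs.eta F X) <-> forall u, response G s u X = fn (restrict u (pa F X)).
Proof.
move=> [noself _] wG XF; set W := ~: (pa F X :|: [set X]); set P := pa F X.
have cf u v : sat1 (s, G) (FCf (ilist (restrict u W) ++ ilist (restrict u P)) (FEq v))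
              <-> response G s u X = v.
  have [LW -> LWE] := ilist_restrict u W; have [LP -> LPE] := ilist_restrict u P.
  rewrite /intervention -map_cat; apply: sat1_cf_others => // Y.
  rewrite mem_cat LWE LPE !inE; case: eqVneq => [->|_]; last by rewrite orbF orNb.
  by rewrite orbT (negbTE (noself X XF)).
rewrite /Defs.eta sat1_bigand_allpairs; split=> [H u|H w p _ _].
  by apply/cf/H; rewrite mem_enum.
have [|u [<- <-]] := @restrict_glue W P w p; last exact/cf/H.
by move=> Y hW hP; exfalso; move: hW; rewrite !inE hP.
Qed.

Lemma sat1_xi (G : system) (s : assign) X :
  wf G -> sat1 (s, G) (xi X) <-> forall u, response G s u X = s X.
Proof.
move=> wG; have cf u v : sat1 (s, G) (FCf (ilist (restrict u (~: [set X]))) (FEq v))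
                        <-> response G s u X = v.
  have [L -> LE] := ilist_restrict u (~: [set X]).
  by apply: sat1_cf_others => // Y; rewrite LE !inE.
rewrite /xi sat1_bigand_allpairs; split=> [H u|H v w _ _].
  have := H (s X) (restrict u (~: [set X])); rewrite !mem_enum.
  by rewrite sat1_or sat1_neg sat1_eq cf => /(_ isT isT) [].
have [u <-] := restrict_surj w; rewrite sat1_or sat1_neg sat1_eq cf H.
by case: (eqVneq (s X) v) => [|/eqP]; [right|left].
Qed.

Lemma in_NC (F : system) X : (X \in NC F) = (X \in en F) && ~~ constantb F X.
Proof. by rewrite !inE; case: (X \in en F); rewrite ?andbT. Qed.

Lemma constantbP (F : system) X :
  reflect (forall p q : passign (pa F X), fn p = fn q) (constantb F X).
Proof.
apply: (iffP forallP) => [H p q|H p]; first exact/eqP/(forallP (H p)).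
by apply/forallP => q; apply/eqP/H.
Qed.

Lemma simfnE (F G : system) X :
  simfn F G X <-> forall u : assign, fn (restrict u (pa F X)) = fn (restrict u (pa G X)).
Proof.
split=> [H u|H p q pq]; first by apply: H => Y h1 h2; rewrite !restrictE.
by have [u [<- <-]] := restrict_glue pq; apply: H.
Qed.

Lemma sim_refl (F : system) : sim F F.
Proof. by split=> // X _; apply/simfnE. Qed.

Lemma sim_sym (F G : system) : sim F G -> sim G F.
Proof.
move=> [E FG]; split=> // X; rewrite -E => /FG /simfnE FGX.
by apply/simfnE => u; rewrite FGX.
Qed.

Lemma sim_trans (F G H : system) : sim F G -> sim G H -> sim F H.
Proof.
move=> [E1 FG] [E2 GH]; split=> [|X XF]; first by rewrite E1.
have /simfnE FGX := FG X XF; have /simfnE GHX : simfn G H X by apply: GH; rewrite -E1.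
by apply/simfnE => u; rewrite FGX GHX.
Qed.

Section Response.
Variables (G : system) (s : assign).
Hypothesis compat_sG : compatible s G.

Lemma response_constP X : (forall u, response G s u X = s X) <-> X \notin NC G.
Proof.
rewrite in_NC /response; case XG: (X \in en G) => //=; rewrite negbK.
split=> [H|/constantbP cst u]; last by rewrite (compat_sG XG); apply: cst.
apply/constantbP => p q; have [u <-] := restrict_surj p; have [v <-] := restrict_surj q.
by rewrite (H u) (H v).
Qed.

Lemma response_simfnP (F : system) X : X \in NC F ->
  (forall u, response G s u X = fn (restrict u (pa F X))) <-> X \in NC G /\ simfn G F X.
Proof.
move=> XF; split=> [H|[XG /simfnE GFX] u]; last first.
  by move: XG; rewrite in_NC /response => /andP [-> _]; apply: GFX.
have XG : X \in NC G.
  apply: contraT => /response_constP H0; move: XF; rewrite in_NC => /andP [_ /constantbP []].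
  move=> p q; have [u <-] := restrict_surj p; have [v <-] := restrict_surj q.
  by rewrite -H -H !H0.
split=> //; apply/simfnE => u; rewrite -H /response.
by move: XG; rewrite in_NC => /andP [->].
Qed.

Lemma responses_sim (F : system) :
  (forall X, X \in NC F -> forall u, response G s u X = fn (restrict u (pa F X))) /\
  (forall X, X \notin NC F -> forall u, response G s u X = s X) <-> sim G F.
Proof.
split=> [[agree const]|[E GF]].
  have FG X : X \in NC F -> X \in NC G /\ simfn G F X.
    by move=> XF; apply/(response_simfnP XF)/agree.
  have E : NC G = NC F.
    apply/setP => X; apply/idP/idP => [XG|/FG [] //].
    by apply: contraTT XG => /const /response_constP.
  by split=> // X; rewrite E => /FG [].
split=> [X XF|X nXF]; last by apply/response_constP; rewrite E.
by apply/(response_simfnP XF); rewrite E; split=> //; apply: GF; rewrite E.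
Qed.

End Response.

Lemma sat1_Phi (F G : system) (s : assign) :
  wf F -> wf G -> compatible s G -> sat1 (s, G) (Phi F) <-> sim G F.
Proof.
move=> wF wG cG; rewrite -(responses_sim cG) /Phi sat1_and !sat1_bigand_map.
have XenF X : X \in NC F -> X \in en F by rewrite in_NC => /andP [].
split=> -[H1 H2]; split=> X; rewrite ?mem_enum ?in_setC => HX.
- by apply/(sat1_eta s wF wG (XenF X HX))/H1; rewrite mem_enum.
- by apply/(sat1_xi s X wG)/H2; rewrite mem_enum in_setC.
- by apply/(sat1_eta s wF wG (XenF X HX))/H1.
- by apply/(sat1_xi s X wG)/H2.
Qed.

Lemma sat1_Theta_Phi (F G : system) (s : assign) (A : {set assign}) :
  wf F -> wf G -> compatible s G ->
  sat1 (s, G) (FAnd (Theta A) (Phi F)) <-> s \in A /\ sim G F.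
Proof. by move=> wF wG cG; rewrite sat1_and sat1_Theta (sat1_Phi wF wG cG). Qed.

Lemma gsat_Theta_Phi (F : system) (S : gteam) (A : {set assign}) :
  wf F -> is_gteam S ->
  gsat S (FAnd (Theta A) (Phi F)) <-> forall s G, S (s, G) -> s \in A /\ sim G F.
Proof.
move=> wF iS; rewrite gsat_flat; split=> [H s G|H [s G]] SsG;
  have [wG cG] := iS s G SsG; by apply/(sat1_Theta_Phi _ wF wG cG)/H.
Qed.

Lemma csat_Theta_Phi (F G : system) (S T : {set assign}) :
  wf F -> is_cteam S G ->
  csat S G (FAnd (Theta T) (Phi F)) <-> forall s, s \in S -> s \in T /\ sim G F.
Proof.
move=> wF [wG cS]; rewrite csat_sat1.
by split=> H s sS; apply/(sat1_Theta_Phi _ wF wG (cS s sS))/H.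
Qed.

Lemma in_gproj (T : gteam) s : s \in gproj T <-> exists G, T (s, G).
Proof. by rewrite inE; split=> /asboolP. Qed.

Lemma gproj_grestr (T : gteam) (F F' : system) s :
  (forall t G, T (t, G) -> sim G F) ->
  (s \in gproj (grestr T F')) = (s \in gproj T) && `[< sim F F' >].
Proof.
move=> simT; apply/idP/andP => [/in_gproj [G [TsG GF']]|[/in_gproj [G TsG] /asboolP FF']].
  by split; [apply/in_gproj; exists G|apply/asboolP/(sim_trans (sim_sym (simT _ _ TsG)))].
by apply/in_gproj; exists G; split=> //; apply: sim_trans (simT _ _ TsG) FF'.
Qed.

Lemma gapprox_sim (S T : gteam) (F : system) :
  (forall s G, S (s, G) -> sim G F) -> (forall t G, T (t, G) -> sim G F) ->
  gproj S = gproj T -> gapprox S T.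
Proof.
move=> simS simT ST F' _; apply/setP => s.
by rewrite (gproj_grestr F' s simS) (gproj_grestr F' s simT) ST.
Qed.

Lemma gprec_sim (S T : gteam) (F : system) :
  is_gteam S -> (forall t H, T (t, H) -> sim H F) ->
  gprec S T <-> forall s G, S (s, G) -> s \in gproj T /\ sim G F.
Proof.
move=> iS simT; split=> [[S0 s G /S0 []|[R [RT SR]] s G SsG]|HS].
  have [wG _] := iS s G SsG.
  have : s \in gproj (grestr S G) by apply/in_gproj; exists G; split=> //; apply: sim_refl.
  rewrite (SR G wG) => /in_gproj [H [/RT TsH HG]]; split; first by apply/in_gproj; exists H.
  exact: sim_trans (sim_sym HG) (simT _ _ TsH).
right; exists (fun p => T p /\ p.1 \in gproj S); split=> [p [] //|].
apply: (gapprox_sim (F := F)) => [s G /HS [] //|t G [/simT] //|].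
apply/setP => s; apply/idP/idP => [sS|/in_gproj [_ [] //]].
by have [G /HS [/in_gproj [H TsH] _]] := (in_gproj S s).1 sS; apply/in_gproj; exists H.
Qed.

Lemma cprec_sim (S T : {set assign}) (F G : system) :
  cprec S G T F <-> forall s, s \in S -> s \in T /\ sim G F.
Proof.
split=> [[-> s|[R [RT [_ [_ [-> GF]]]]] s sR]|H]; first by rewrite inE.
  by split=> //; apply: (subsetP RT).
have [->|[s sS]] := set_0Vmem S; [by left|right; exists S].
have S0 : S != set0 by apply/set0Pn; exists s.
split; first by apply/subsetP => t /H [].
by do 3!split=> //; have [] := H s sS.
Qed.

End Semantics.

Theorem lemma4p8 (sg : signature) (F : system sg) :
  wf F ->
  (forall S T : gteam sg,
      is_gteam S -> is_gteam T -> uniform T -> T = grestr T F ->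
      (gsat S (FAnd (Theta (gproj T)) (Phi F)) <-> gprec S T)) /\
  (forall (S T : {set assign sg}) (G : system sg),
      is_cteam S G -> is_cteam T F ->
      (csat S G (FAnd (Theta T) (Phi F)) <-> cprec S G T F)).
Proof.
move=> wF; split=> [S T iS _ _ TF|S T G iS _].
  have simT t H : T (t, H) -> sim H F by rewrite TF => -[].
  by rewrite (gsat_Theta_Phi _ wF iS) (gprec_sim iS simT).
by rewrite (csat_Theta_Phi _ wF iS) cprec_sim.
Qed.
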